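(* Pruned multiplication is an associative operation on $T^1(\Sigma)$. The unary operations $*$ and $+$ on $T^1(\Sigma)$ are idempotent, and the subsemigroup of $T^1(\Sigma)$ generated by their images is commutative.
   Context: Let $\Sigma$ be a set. A $\Sigma$-tree is a finite directed graph whose underlying undirected graph is a tree, edges labelled by elements of $\Sigma$, with distinguished start and end vertices such that there is a (possibly empty) directed path from start to end vertex. A morphism $X\to Y$ maps vertices to vertices and edges to edges, preserving initial vertex, terminal vertex and label of each edge, and mapping start/end vertex to start/end vertex; isomorphisms are morphisms bijective on vertices and edges. A retraction is an idempotent morphism $X\to X$, its image a retract; $X$ is pruned if it admits no non-identity retraction. Every tree $X$ has a pruned retract, unique up to isomorphism, whose isomorphism type is $\overline{X}$. $T^1(\Sigma)$ is the set of isomorphism types of pruned $\Sigma$-trees. Unpruned operations: $X\times Y$ identifies the end vertex of (a copy of) $X$ with the start vertex of (a disjoint copy of) $Y$, start vertex that of $X$, end vertex that of $Y$; $X^{(+)}$ is $X$ with end vertex moved to the start vertex; $X^{( * )}$ is $X$ with start vertex moved to the end vertex. Pruned operations on $T^1(\Sigma)$: $XY=\overline{X\times Y}$, $X^+=\overline{X^{(+)}}$, $X^*=\overline{X^{( * )}}$. *)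

From mathcomp Require Import all_boot.
Set Implicit Arguments. Unset Strict Implicit. Unset Printing Implicit Defensive.

Record sgraph (Sigma : Type) := SGraph {
  V : finType;
  E : finType;
  src : E -> V;
  tgt : E -> V;
  lab : E -> Sigma;
  st : V;
  en : V }.

Arguments V {Sigma} _.
Arguments E {Sigma} _.

Section Defs.
Variable Sigma : Type.
Implicit Types X Y P : sgraph Sigma.

Definition uadj X : rel (V X) := fun u v =>
  [exists e : E X, ((src e == u) && (tgt e == v)) || ((src e == v) && (tgt e == u))].
Definition dadj X : rel (V X) := fun u v =>
  [exists e : E X, (src e == u) && (tgt e == v)].

(* A Sigma-tree: the underlying undirected (multi)graph is a tree, i.e. it is
   connected with #E = #V - 1; and there is a directed path from start to end. *)
Definition is_tree X : Prop :=
  (forall u v : V X, connect (@uadj X) u v) /\ #|E X|.+1 = #|V X| /\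
  connect (@dadj X) (st X) (en X).

Definition is_morph X Y (fv : V X -> V Y) (fe : E X -> E Y) : Prop :=
  (forall e, src (fe e) = fv (src e)) /\ (forall e, tgt (fe e) = fv (tgt e)) /\
  (forall e, lab (fe e) = lab e) /\ fv (st X) = st Y /\ fv (en X) = en Y.

Definition iso X Y : Prop :=
  exists (fv : V X -> V Y) (fe : E X -> E Y),
    is_morph fv fe /\ bijective fv /\ bijective fe.

Definition is_retraction X (rv : V X -> V X) (re : E X -> E X) : Prop :=
  is_morph rv re /\ (forall v, rv (rv v) = rv v) /\ (forall e, re (re e) = re e).

Definition pruned X : Prop :=
  forall rv re, @is_retraction X rv re -> (forall v, rv v = v) /\ (forall e, re e = e).

(* P is isomorphic to the retract (image) of the retraction (rv, re) of X:
   there is a morphism P -> X, injective on vertices and edges, whose image is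
   exactly the image of the retraction. *)
Definition iso_to_image P X (rv : V X -> V X) (re : E X -> E X) : Prop :=
  exists (iv : V P -> V X) (ie : E P -> E X),
    is_morph iv ie /\ injective iv /\ injective ie /\
    (forall v, (exists w, iv w = v) <-> (exists u, rv u = v)) /\
    (forall e, (exists d, ie d = e) <-> (exists c, re c = e)).

Definition is_retract P X : Prop :=
  exists rv re, @is_retraction X rv re /\ iso_to_image P rv re.

(* pruned Sigma-trees: representatives of elements of T^1(Sigma) *)
Definition ptree X : Prop := is_tree X /\ pruned X.

(* P represents \overline{X}: P is a pruned tree isomorphic to a retract of X *)
Definition prunedof X P : Prop := ptree P /\ is_retract P X.

Definition glueV X Y := (V X + {y : V Y | y != st Y})%type.

Definition inY X Y (y : V Y) : glueV X Y :=
  match insub y with Some y' => inr y' | None => inl (en X) end.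

Definition gsrc X Y (e : E X + E Y) : glueV X Y :=
  match e with inl e => inl (src e) | inr e => inY X (src e) end.
Definition gtgt X Y (e : E X + E Y) : glueV X Y :=
  match e with inl e => inl (tgt e) | inr e => inY X (tgt e) end.
Definition glab X Y (e : E X + E Y) : Sigma :=
  match e with inl e => lab e | inr e => lab e end.

Definition tmul X Y : sgraph Sigma :=
  @SGraph Sigma (glueV X Y : finType) ((E X + E Y)%type : finType)
    (@gsrc X Y) (@gtgt X Y) (@glab X Y) (inl (st X)) (inY X (en Y)).

Definition tplus X : sgraph Sigma :=
  @SGraph Sigma (V X) (E X) (@src _ X) (@tgt _ X) (@lab _ X) (st X) (st X).
Definition tstar X : sgraph Sigma :=
  @SGraph Sigma (V X) (E X) (@src _ X) (@tgt _ X) (@lab _ X) (en X) (en X).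

(* the subsemigroup of T^1 generated by the images of + and star
   (as a predicate on representatives, closed under isomorphism) *)
Inductive gen_plus_star : sgraph Sigma -> Prop :=
| gen_p X P : ptree X -> prunedof (tplus X) P -> gen_plus_star P
| gen_s X P : ptree X -> prunedof (tstar X) P -> gen_plus_star P
| gen_m A B P : gen_plus_star A -> gen_plus_star B -> prunedof (tmul A B) P ->
    gen_plus_star P.

End Defs.

From mathcomp Require Import all_boot zify.
Set Implicit Arguments. Unset Strict Implicit. Unset Printing Implicit Defensive.

(* A graph X is homomorphically equivalent to any retract of it, in particular
   to its pruned retract, and two homomorphically equivalent pruned graphs are
   isomorphic: composing the morphisms both ways gives endomorphisms of pruned
   graphs, some power of which is a retraction and hence the identity, so both
   morphisms are injective and counting makes them bijective.  Each law thus
   reduces to morphisms in both directions between the unpruned constructions.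
   For commutativity, every element of the generated subsemigroup has equal
   start and end vertex, and gluing two such graphs in either order gives the
   same graph. *)

Lemma iter_idempotent (T : finType) (h : T -> T) :
  exists2 m, 0 < m & forall x, iter m h (iter m h x) = iter m h x.
Proof.
pose F (i : 'I_#|{ffun T -> T}|.+1) := [ffun x => iter i h x].
have /injectivePn[i [j neq_ij eq_ij]] : ~~ injectiveb F.
  by apply/injectiveP => /leq_card; rewrite card_ord ltnn.
have {}eq_ij x : iter i h x = iter j h x.
  by have := congr1 (fun f : {ffun T -> T} => f x) eq_ij; rewrite !ffunE.
wlog lt_ij : i j neq_ij eq_ij / i < j.
  move=> wlog_ij; case: (ltngtP i j) => [|gt_ij|/val_inj eq_ij']; first exact: wlog_ij.
  - by apply: (wlog_ij j i); rewrite 1?eq_sym.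
  - by rewrite eq_ij' eqxx in neq_ij.
set p := j - i.
have iter_period k n x : i <= n -> iter (k * p + n) h x = iter n h x.
  move=> le_in; elim: k => // k IHk.
  have -> : k.+1 * p + n = (n - i) + j + k * p by rewrite /p; lia.
  by rewrite !iterD -eq_ij -!iterD -IHk; congr iter; lia.
exists (i.+1 * p) => [|x]; first by rewrite muln_gt0 subn_gt0.
by rewrite -iterD iter_period //; rewrite /p; nia.
Qed.

Section PrunedGraphs.
Variable Sigma : Type.
Implicit Types X Y Z A B P Q : sgraph Sigma.

Definition homomorphic X Y := exists (fv : V X -> V Y) (fe : E X -> E Y), is_morph fv fe.

Lemma is_morph_id X : is_morph (@id (V X)) (@id (E X)).
Proof. by do !split. Qed.

Lemma is_morph_comp X Y Z (fv : V X -> V Y) fe (gv : V Y -> V Z) ge :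
  is_morph fv fe -> is_morph gv ge -> is_morph (gv \o fv) (ge \o fe).
Proof.
move=> [fsrc [ftgt [flab [fst fen]]]] [gsrc [gtgt [glab [gst gen]]]].
by split; [|split; [|split; [|split]]] => /= *;
  rewrite ?(gsrc, fsrc, gtgt, ftgt, glab, flab, fst, gst, fen, gen).
Qed.

Lemma is_morph_iter X (hv : V X -> V X) he n :
  is_morph hv he -> is_morph (iter n hv) (iter n he).
Proof.
move=> morph_h; elim: n => [|n IHn]; first exact: is_morph_id.
exact: is_morph_comp IHn morph_h.
Qed.

Lemma homomorphic_refl X : homomorphic X X.
Proof. by exists id, id; apply: is_morph_id. Qed.

Lemma homomorphic_trans X Y Z : homomorphic X Y -> homomorphic Y Z -> homomorphic X Z.
Proof.
by move=> [fv [fe mf]] [gv [ge mg]]; exists (gv \o fv), (ge \o fe); apply: is_morph_comp.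
Qed.

Lemma pruned_endo_inj X (hv : V X -> V X) he :
  pruned X -> is_morph hv he -> injective hv /\ injective he.
Proof.
move=> prunedX morph_h.
(* Iterating on the disjoint union gives one power idempotent on vertices and edges alike. *)
pose h (s : V X + E X) := match s with inl v => inl (hv v) | inr e => inr (he e) end.
have [m m_gt0 idem_m] := iter_idempotent h.
have iter_inl n v : iter n h (inl v) = inl (iter n hv v) by elim: n => //= n ->.
have iter_inr n e : iter n h (inr e) = inr (iter n he e) by elim: n => //= n ->.
have [idv ide] : (forall v, iter m hv v = v) /\ (forall e, iter m he e = e).
  apply: prunedX; split; first exact: is_morph_iter.
  split=> [v|e]; [have := idem_m (inl v) | have := idem_m (inr e)];
    by rewrite ?iter_inl ?iter_inr => -[].
case: m m_gt0 idv ide {idem_m} => // m _ idv ide.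
by split=> x y eq_xy; [rewrite -(idv x) -(idv y) | rewrite -(ide x) -(ide y)];
  rewrite !iterSr eq_xy.
Qed.

Lemma pruned_homomorphic_iso X Y :
  pruned X -> pruned Y -> homomorphic X Y -> homomorphic Y X -> iso X Y.
Proof.
move=> prunedX prunedY [fv [fe mf]] [gv [ge mg]].
have [/inj_compr injfv /inj_compr injfe] := pruned_endo_inj prunedX (is_morph_comp mf mg).
have [/inj_compr injgv /inj_compr injge] := pruned_endo_inj prunedY (is_morph_comp mg mf).
exists fv, fe; split=> //; split.
- exact: inj_card_bij injfv (leq_card _ injgv).
- exact: inj_card_bij injfe (leq_card _ injge).
Qed.

Lemma retract_homomorphic P X : is_retract P X -> homomorphic P X /\ homomorphic X P.
Proof.
move=> [rv [re [[mr _] [iv [ie [mi [inj_iv [_ [imv ime]]]]]]]]].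
split; first by exists iv, ie.
have pre_v x : exists w, iv w == rv x.
  have [w <-] : exists w, iv w = rv x by apply/imv; exists x.
  by exists w.
have pre_e x : exists d, ie d == re x.
  have [d <-] : exists d, ie d = re x by apply/ime; exists x.
  by exists d.
have ivK x : iv (xchoose (pre_v x)) = rv x := eqP (xchooseP (pre_v x)).
have ieK x : ie (xchoose (pre_e x)) = re x := eqP (xchooseP (pre_e x)).
move: mr mi => [rsrc [rtgt [rlab [rst ren]]]] [isrc [itgt [ilab [ist ien]]]].
exists (fun x => xchoose (pre_v x)), (fun x => xchoose (pre_e x)).
split; [|split; [|split; [|split]]] => [e|e|e||]; try apply: inj_iv.
- by rewrite ivK -isrc ieK rsrc.
- by rewrite ivK -itgt ieK rtgt.
- by rewrite -ilab ieK rlab.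
- by rewrite ivK rst ist.
- by rewrite ivK ren ien.
Qed.

Lemma prunedof_homomorphic X P : prunedof X P -> homomorphic P X /\ homomorphic X P.
Proof. by move=> [_ /retract_homomorphic]. Qed.

Lemma prunedof_iso X Y P Q :
  prunedof X P -> prunedof Y Q -> homomorphic X Y -> homomorphic Y X -> iso P Q.
Proof.
move=> PX QY XY YX; have [PtoX XtoP] := prunedof_homomorphic PX.
have [QtoY YtoQ] := prunedof_homomorphic QY.
apply: pruned_homomorphic_iso (proj2 (proj1 PX)) (proj2 (proj1 QY)) _ _.
- exact: homomorphic_trans PtoX (homomorphic_trans XY YtoQ).
- exact: homomorphic_trans QtoY (homomorphic_trans YX XtoP).
Qed.

Lemma prunedof_loop X P : prunedof X P -> st X = en X -> st P = en P.
Proof.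
by move=> [_ [rv [re [_ [iv [ie [[_ [_ [_ [ist ien]]]] [inj_iv _]]]]]]]] loopX;
  apply: inj_iv; rewrite ist ien.
Qed.

Variant inY_spec X Y : V Y -> glueV X Y -> Type :=
  | InYst : inY_spec (st Y) (inl (en X))
  | InYval (y : {y : V Y | y != st Y}) : inY_spec (val y) (inr y).

Lemma inYP X Y (y : V Y) : @inY_spec X Y y (inY X y).
Proof. by rewrite /inY; case: insubP => [y' _ <- | /negbNE/eqP->]; constructor. Qed.

Lemma inY_st X Y : inY X (st Y) = inl (en X).
Proof. by rewrite /inY insubF // eqxx. Qed.

Lemma inY_val X Y (y : {y : V Y | y != st Y}) : inY X (val y) = inr y.
Proof. by rewrite /inY valK. Qed.

Lemma tmul_homomorphic A A' B B' :
  homomorphic A A' -> homomorphic B B' -> homomorphic (tmul A B) (tmul A' B').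
Proof.
move=> [fv [fe [fsrc [ftgt [flab [fst fen]]]]]] [gv [ge [gsrc [gtgt [glab [gst gen]]]]]].
pose hv (s : glueV A B) : glueV A' B' :=
  match s with inl x => inl (fv x) | inr y => inY A' (gv (val y)) end.
have hv_inY y : hv (inY A y) = inY A' (gv y).
  by case: (inYP A y) => //=; rewrite gst inY_st fen.
exists hv, (fun s => match s with inl e => inl (fe e) | inr e => inr (ge e) end).
split; [|split; [|split; [|split]]] => [[e|e]|[e|e]|[e|e]||] /=.
- by rewrite fsrc.
- by rewrite hv_inY gsrc.
- by rewrite ftgt.
- by rewrite hv_inY gtgt.
- exact: flab.
- exact: glab.
- by rewrite fst.
- by rewrite hv_inY gen.
Qed.

Lemma tmul_assoc_homomorphic X Y Z : homomorphic (tmul (tmul X Y) Z) (tmul X (tmul Y Z)).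
Proof.
pose hv (s : glueV (tmul X Y) Z) : glueV X (tmul Y Z) :=
  match s with
  | inl (inl x) => inl x
  | inl (inr y) => inY X (inl (val y) : V (tmul Y Z))
  | inr z => inY X (inY Y (val z) : V (tmul Y Z))
  end.
have hv_inYl y : hv (inl (inY X y)) = inY X (inl y : V (tmul Y Z)).
  by case: (inYP X y) => //=; rewrite -[inl (st Y)]/(st (tmul Y Z)) inY_st.
have hv_inYr z : hv (inY (tmul X Y) z) = inY X (inY Y z : V (tmul Y Z)).
  by case: (inYP (tmul X Y) z) => //; rewrite inY_st -hv_inYl.
have hv_inl x : hv (inl (inl x)) = inl x by [].
clearbody hv.
exists hv, (fun s => match s with
  | inl (inl e) => inl e | inl (inr e) => inr (inl e) | inr e => inr (inr e) end).
by split; [|split; [|split; [|split]]] => [[[e|e]|e]|[[e|e]|e]|[[e|e]|e]||] /=;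
  rewrite ?hv_inl ?hv_inYl ?hv_inYr.
Qed.

Lemma tmul_assoc_homomorphic_inv X Y Z : homomorphic (tmul X (tmul Y Z)) (tmul (tmul X Y) Z).
Proof.
pose rho (w : glueV Y Z) : glueV (tmul X Y) Z :=
  match w with inl y => inl (inY X y) | inr z => inr z end.
pose hv (s : glueV X (tmul Y Z)) : glueV (tmul X Y) Z :=
  match s with inl x => inl (inl x) | inr w => rho (val w) end.
have hv_inY w : hv (inY X w) = rho w by case: (inYP X w) => //=; rewrite inY_st.
have rho_inY z : rho (inY Y z) = inY (tmul X Y) z.
  by case: (inYP Y z) => [|z'] /=; rewrite ?inY_st ?inY_val.
exists hv, (fun s => match s with
  | inl e => inl (inl e) | inr (inl e) => inl (inr e) | inr (inr e) => inr e end).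
by split; [|split; [|split; [|split]]] => [[e|[e|e]]|[e|[e|e]]|[e|[e|e]]||] /=;
  rewrite ?hv_inY ?rho_inY.
Qed.

Lemma tplus_homomorphic A B : homomorphic A B -> homomorphic (tplus A) (tplus B).
Proof. by move=> [fv [fe [? [? [? [fst _]]]]]]; exists fv, fe; do !split. Qed.

Lemma tstar_homomorphic A B : homomorphic A B -> homomorphic (tstar A) (tstar B).
Proof. by move=> [fv [fe [? [? [? [_ fen]]]]]]; exists fv, fe; do !split. Qed.

Lemma tplus_homomorphic_loop A B :
  st B = en B -> homomorphic A B -> homomorphic (tplus A) B.
Proof.
by move=> loopB [fv [fe [? [? [? [fst _]]]]]]; exists fv, fe; do !split=> //; rewrite /= fst.
Qed.

Lemma tstar_homomorphic_loop A B :
  st B = en B -> homomorphic A B -> homomorphic (tstar A) B.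
Proof.
by move=> loopB [fv [fe [? [? [? [_ fen]]]]]]; exists fv, fe; do !split=> //; rewrite /= fen.
Qed.

Lemma tmul_loop_homomorphicC A B :
  st A = en A -> st B = en B -> homomorphic (tmul A B) (tmul B A).
Proof.
move=> loopA loopB.
pose hv (s : glueV A B) : glueV B A :=
  match s with inl a => inY B a | inr b => inl (val b) end.
have inY_enA : inY B (en A) = inl (en B) by rewrite -loopA inY_st.
have hv_inY b : hv (inY A b) = inl b by case: (inYP A b) => //=; rewrite inY_enA loopB.
have hv_inl a : hv (inl a) = inY B a by [].
clearbody hv.
exists hv, (fun s => match s with inl e => inr e | inr e => inl e end).
by split; [|split; [|split; [|split]]] => [[e|e]|[e|e]|[e|e]||] /=;
  rewrite ?hv_inl ?hv_inY ?inY_st ?inY_enA ?loopB.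
Qed.

Lemma gen_plus_star_loop P : gen_plus_star P -> st P = en P.
Proof.
elim=> [X Q _ XQ|X Q _ XQ|A B Q _ loopA _ loopB XQ]; apply: (prunedof_loop XQ) => //.
by rewrite /= -loopB inY_st loopA.
Qed.

Lemma prunedof_tmulA X Y Z XY XYZ YZ XYZ' :
  prunedof (tmul X Y) XY -> prunedof (tmul XY Z) XYZ ->
  prunedof (tmul Y Z) YZ -> prunedof (tmul X YZ) XYZ' -> iso XYZ XYZ'.
Proof.
move=> /prunedof_homomorphic[XY_XY XY_XY'] XYZ_XYZ.
move=> /prunedof_homomorphic[YZ_YZ YZ_YZ'] XYZ_XYZ'.
apply: prunedof_iso XYZ_XYZ XYZ_XYZ' _ _.
- apply: homomorphic_trans (tmul_homomorphic XY_XY (homomorphic_refl Z)) _.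
  apply: homomorphic_trans (tmul_assoc_homomorphic X Y Z) _.
  exact: tmul_homomorphic (homomorphic_refl X) YZ_YZ'.
- apply: homomorphic_trans (tmul_homomorphic (homomorphic_refl X) YZ_YZ) _.
  apply: homomorphic_trans (tmul_assoc_homomorphic_inv X Y Z) _.
  exact: tmul_homomorphic XY_XY' (homomorphic_refl Z).
Qed.

Lemma prunedof_tplus_idem X A B : prunedof (tplus X) A -> prunedof (tplus A) B -> iso B A.
Proof.
move=> XA AB; have [A_X X_A] := prunedof_homomorphic XA.
apply: prunedof_iso AB XA _ _; first exact: tplus_homomorphic_loop.
exact: (tplus_homomorphic X_A).
Qed.

Lemma prunedof_tstar_idem X A B : prunedof (tstar X) A -> prunedof (tstar A) B -> iso B A.
Proof.
move=> XA AB; have [A_X X_A] := prunedof_homomorphic XA.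
apply: prunedof_iso AB XA _ _; first exact: tstar_homomorphic_loop.
exact: (tstar_homomorphic X_A).
Qed.

Lemma prunedof_tmul_loopC A B AB BA : st A = en A -> st B = en B ->
  prunedof (tmul A B) AB -> prunedof (tmul B A) BA -> iso AB BA.
Proof.
move=> loopA loopB ABAB BABA.
by apply: prunedof_iso ABAB BABA _ _; apply: tmul_loop_homomorphicC.
Qed.
End PrunedGraphs.

Theorem corollary4p6 (Sigma : Type) :
  (* pruned multiplication is associative on T^1(Sigma): (XY)Z = X(YZ) *)
  (forall X Y Z XY XYZ YZ XYZ' : sgraph Sigma,
     ptree X -> ptree Y -> ptree Z ->
     prunedof (tmul X Y) XY -> prunedof (tmul XY Z) XYZ ->
     prunedof (tmul Y Z) YZ -> prunedof (tmul X YZ) XYZ' ->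
     iso XYZ XYZ') /\
  (* + is idempotent: (X^+)^+ = X^+ *)
  (forall X A B : sgraph Sigma,
     ptree X -> prunedof (tplus X) A -> prunedof (tplus A) B -> iso B A) /\
  (* star is idempotent: (X^* )^* = X^* *)
  (forall X A B : sgraph Sigma,
     ptree X -> prunedof (tstar X) A -> prunedof (tstar A) B -> iso B A) /\
  (* the subsemigroup generated by the images of + and star is commutative *)
  (forall A B AB BA : sgraph Sigma,
     gen_plus_star A -> gen_plus_star B ->
     prunedof (tmul A B) AB -> prunedof (tmul B A) BA -> iso AB BA).
Proof.
split; [|split; [|split]].
- by move=> X Y Z XY XYZ YZ XYZ' _ _ _; apply: prunedof_tmulA.
- by move=> X A B _; apply: prunedof_tplus_idem.
- by move=> X A B _; apply: prunedof_tstar_idem.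
- move=> A B AB BA /gen_plus_star_loop loopA /gen_plus_star_loop loopB.
  exact: prunedof_tmul_loopC.
Qed.
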